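(* For positive integers $m$ and $n$, \[ \overline{{m+n+1 \brack m+1}}_{q,t} =1 + \sum_{j=1}^{n} q^{j} \left( \overline{{m+j \brack j}}_{q,t} + t\, \overline{{m+j-1 \brack j-1}}_{q,t} \right). \]
   Context: An overpartition is a partition in which the last occurrence of each distinct part size may be overlined; its weight $|\lambda|$ is the sum of its parts. For integers $0\le b\le a$, $\overline{{a \brack b}}_{q,t}=\sum_{\lambda} t^{\#_o(\lambda)} q^{|\lambda|}$, the sum over all overpartitions $\lambda$ with largest part at most $a-b$ and at most $b$ parts, $\#_o(\lambda)$ being the number of overlined parts. *)

From mathcomp Require Import all_boot all_order all_algebra.
Set Implicit Arguments. Unset Strict Implicit. Unset Printing Implicit Defensive.
Import GRing.Theory.
Local Open Scope ring_scope.

(* An overpartition is encoded as the list of its parts in nonincreasing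
   order, each part paired with a boolean "is overlined".  Only the last
   occurrence of each distinct part size may be overlined. *)
Fixpoint overline_ok (s : seq (nat * bool)) : bool :=
  match s with
  | [::] => true
  | x :: s' =>
      (x.2 ==> (match s' with [::] => true | y :: _ => y.1 != x.1 end))
      && overline_ok s'
  end.

Definition is_overpartition (s : seq (nat * bool)) : bool :=
  [&& sorted (fun x y : nat * bool => y.1 <= x.1)%N s,
      all (fun x : nat * bool => 0 < x.1)%N s & overline_ok s].

Definition op_weight (s : seq (nat * bool)) : nat := sumn (map fst s).
Definition op_noverlined (s : seq (nat * bool)) : nat := count snd s.

(* overline{[a, b]}_{q,t}: sum over overpartitions with largest part at most
   a - b and at most b parts (i.e. exactly k parts, k = 0..b), of
   t^{#overlined} q^{weight}. *)
Definition op_seq (N k : nat) (s : k.-tuple ('I_N.+1 * bool)) : seq (nat * bool) :=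
  map (fun x => (val x.1, x.2)) s.

Definition obinom (R : comNzRingType) (a b : nat) (q t : R) : R :=
  \sum_(k < b.+1)
    \sum_(s : k.-tuple ('I_(a - b).+1 * bool) | is_overpartition (op_seq s))
      t ^+ op_noverlined (op_seq s) * q ^+ op_weight (op_seq s).

(** Let [op_exact k N] be the generating function of overpartitions with
    exactly [k] parts, all at most [N], and [op_atmost N k] that of
    overpartitions with at most [k] parts, all at most [N], so that
    [obinom (N + k) k = op_atmost N k].  Splitting off the largest part and
    removing the first column of the Ferrers diagram give two Pascal-type
    recurrences for [op_atmost]; together they yield the conjugation symmetry
    [op_atmost N k = op_atmost k N].  Telescoping the largest-part recurrence
    in [N] and applying the symmetry to each term gives the identity. *)

From mathcomp Require Import all_boot all_order all_algebra.
From mathcomp Require Import ring zify.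
Set Implicit Arguments.
Unset Strict Implicit.
Unset Printing Implicit Defensive.

Import GRing.Theory.
Local Open Scope ring_scope.

Definition parts_le (N : nat) (s : seq (nat * bool)) : bool := all (fun x => x.1 <= N)%N s.

Lemma parts_le_trans c d s : (c <= d)%N -> parts_le c s -> parts_le d s.
Proof. by move=> le_cd /allP le_s; apply/allP => x /le_s /leq_trans; apply. Qed.

Lemma path_parts_le c y s :
  path (fun x y : nat * bool => y.1 <= x.1)%N y s -> (y.1 <= c)%N -> parts_le c s.
Proof.
have ge_trans : transitive (fun x y : nat * bool => y.1 <= x.1)%N.
  by move=> b a d /= le_ba le_db; apply: leq_trans le_db le_ba.
move=> /(order_path_min ge_trans) le_ys le_yc.
by apply/allP => z /(allP le_ys) le_zy; apply: leq_trans le_zy le_yc.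
Qed.

Lemma is_overpartition_cons x s :
  is_overpartition (x :: s) =
  [&& (0 < x.1)%N, parts_le (x.1 - x.2) s & is_overpartition s].
Proof.
case: x => p b; case: s => [|y s].
  by rewrite /is_overpartition /= implybT !andbT.
rewrite /is_overpartition /=.
case sorted_ys: (path _ y s); last by rewrite !(andbF, andFb).
rewrite (andb_idr (path_parts_le sorted_ys)) !andbT.
case: (posnP y.1) => [y0|y_pos]; first by rewrite y0 /= !andbF.
have -> : (y.1 <= p - b)%N = (y.1 <= p)%N && (b ==> (y.1 != p)).
  by case: b => /=; lia.
by case: (0 < p)%N; case: (y.1 <= p)%N; case: (b ==> (y.1 != p)); rewrite /= ?andbF.
Qed.

Lemma is_overpartition_parts_le_cons N x s :
  is_overpartition (x :: s) && parts_le N (x :: s) =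
  [&& (0 < x.1 <= N)%N, is_overpartition s & parts_le (x.1 - x.2) s].
Proof.
rewrite is_overpartition_cons /= [parts_le N _]/=.
case: (leqP x.1 N) => [le_xN|]; last by rewrite !andbF.
have /parts_le_trans sub_N := leq_trans (leq_subr x.2 x.1) le_xN.
by case: (boolP (parts_le _ s)) => [/sub_N ->|_]; rewrite ?andbT ?andbF.
Qed.

Lemma parts_le_op_seq N k (s : k.-tuple ('I_N.+1 * bool)) : parts_le N (op_seq s).
Proof. by apply/allP => _ /mapP[[x b] _ ->]; rewrite -ltnS ltn_ord. Qed.

Section BigTuple.
Variables (R : Type) (idx : R) (op : Monoid.com_law idx).

Lemma big_tuple_cons (T : finType) n (P : pred (n.+1.-tuple T)) (F : n.+1.-tuple T -> R) :
  \big[op/idx]_(s | P s) F s =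
  \big[op/idx]_(x : T) \big[op/idx]_(s : n.-tuple T | P [tuple of x :: s]) F [tuple of x :: s].
Proof.
rewrite pair_big_dep (reindex (fun p : T * n.-tuple T => [tuple of p.1 :: p.2])) /=.
  by apply: eq_bigl => -[x s].
exists (fun s => (thead s, behead_tuple s)) => [[x s] _ | s _].
  by congr pair; apply: val_inj.
by rewrite [RHS]tuple_eta.
Qed.

End BigTuple.

Section OverpartitionGF.
Variables (R : comNzRingType) (q t : R).

(* Split off the largest part [p]: if it is overlined, the remaining parts are
   at most [p.-1], otherwise at most [p]. *)
Fixpoint op_exact (k N : nat) : R :=
  if k is k'.+1 then
    \sum_(p < N.+1 | (0 < p)%N) q ^+ p * (op_exact k' p + t * op_exact k' p.-1)
  else 1.

Definition op_atmost (N k : nat) : R := \sum_(i < k.+1) op_exact i N.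

Lemma op_exactS0 k : op_exact k.+1 0 = 0.
Proof. by apply: big_pred0 => -[[|p] lt_p1]. Qed.

Lemma op_exactSS k N :
  op_exact k.+1 N.+1 = op_exact k.+1 N + q ^+ N.+1 * (op_exact k N.+1 + t * op_exact k N).
Proof. by rewrite /= big_mkcond big_ord_recr /= -big_mkcond. Qed.

Lemma op_atmostS N k : op_atmost N k.+1 = op_atmost N k + op_exact k.+1 N.
Proof. by rewrite /op_atmost big_ord_recr. Qed.

Lemma op_atmost0r N : op_atmost N 0 = 1.
Proof. by rewrite /op_atmost big_ord1. Qed.

Lemma op_atmost0l k : op_atmost 0 k = 1.
Proof. by elim: k => [|k IHk]; rewrite ?op_atmost0r // op_atmostS IHk op_exactS0 addr0. Qed.

Lemma op_atmost_largest N k :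
  op_atmost N.+1 k.+1 = op_atmost N k.+1 + q ^+ N.+1 * (op_atmost N.+1 k + t * op_atmost N k).
Proof.
elim: k => [|k IHk].
  by rewrite !op_atmostS !op_atmost0r op_exactSS /=; ring.
rewrite [in RHS](op_atmostS N.+1 k) [LHS]op_atmostS IHk op_exactSS !(op_atmostS N).
ring.
Qed.

(* Removing the first column of the Ferrers diagram. *)
Lemma op_exact_first_column k N :
  op_exact k.+1 N.+1 = q ^+ k.+1 * (op_atmost N k.+1 + t * op_atmost N k).
Proof.
elim: k N => [|k IHk] N.
  rewrite op_atmostS !op_atmost0r.
  elim: N => [|N IHN]; first by rewrite op_exactSS op_exactS0 /=; ring.
  by rewrite op_exactSS {1}IHN (op_exactSS 0 N) /= !exprS; ring.
elim: N => [|N IHN].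
  by rewrite op_exactSS IHk !op_atmost0l !op_exactS0 !exprS; ring.
rewrite op_exactSS IHN IHk IHk.
rewrite [op_atmost N.+1 k.+2]op_atmost_largest [op_atmost N.+1 k.+1]op_atmost_largest.
by rewrite !exprS; ring.
Qed.

Lemma op_atmost_parts N k :
  op_atmost N.+1 k.+1 = op_atmost N.+1 k + q ^+ k.+1 * (op_atmost N k.+1 + t * op_atmost N k).
Proof. by rewrite op_atmostS op_exact_first_column. Qed.

Lemma op_atmostC N k : op_atmost N k = op_atmost k N.
Proof.
elim: N k => [|N IHN] k; first by rewrite op_atmost0l op_atmost0r.
elim: k => [|k IHk]; first by rewrite op_atmost0l op_atmost0r.
by rewrite op_atmost_largest op_atmost_parts IHk !IHN.
Qed.

Lemma op_atmost_telescope n k :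
  op_atmost n k.+1 = 1 + \sum_(1 <= j < n.+1) q ^+ j * (op_atmost j k + t * op_atmost j.-1 k).
Proof.
elim: n => [|n IHn]; first by rewrite big_geq // op_atmost0l addr0.
by rewrite big_nat_recr //= addrA -IHn op_atmost_largest.
Qed.

Definition op_wt (s : seq (nat * bool)) : R := t ^+ op_noverlined s * q ^+ op_weight s.

(* The bound [N] is decoupled from the tuple type so that it can vary in the
   recursion on the first part. *)
Definition op_tuple_sum (M N i : nat) : R :=
  \sum_(s : i.-tuple ('I_M.+1 * bool) | is_overpartition (op_seq s) && parts_le N (op_seq s))
    op_wt (op_seq s).

Lemma op_tuple_sum0 M N : op_tuple_sum M N 0 = 1.
Proof.
rewrite /op_tuple_sum (eq_bigl (pred1 [tuple])) ?big_pred1_eq ?/op_wt ?mulr1 //.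
by move=> s; rewrite [s]tuple0 /=; symmetry; apply/eqP.
Qed.

Lemma op_tuple_sumS M N i :
  op_tuple_sum M N i.+1 =
  \sum_(x : 'I_M.+1 * bool | (0 < x.1 <= N)%N) t ^+ x.2 * q ^+ x.1 * op_tuple_sum M (x.1 - x.2) i.
Proof.
rewrite /op_tuple_sum big_tuple_cons [RHS]big_mkcond; apply: eq_bigr => -[p b] _ /=.
rewrite /op_seq /=; under eq_bigl do rewrite is_overpartition_parts_le_cons /=.
case: ifP => _; last by apply: big_pred0.
rewrite mulr_sumr; apply: eq_big => s // _.
by rewrite /op_wt /op_noverlined /op_weight /= !exprD; ring.
Qed.

Lemma op_tuple_sum_exact M N i : (N <= M)%N -> op_tuple_sum M N i = op_exact i N.
Proof.
elim: i N => [|i IHi] N le_NM; first exact: op_tuple_sum0.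
have split_bool p : q ^+ p * (op_exact i p + t * op_exact i p.-1) =
                    \sum_(b : bool) t ^+ b * q ^+ p * op_exact i (p - b).
  by rewrite big_bool /= subn0 subn1; ring.
rewrite op_tuple_sumS /= (big_ord_widen_cond (n1 := N.+1) M.+1 (fun p => 0 < p)%N
  (fun p => q ^+ p * (op_exact i p + t * op_exact i p.-1)) le_NM).
under [RHS]eq_bigr do rewrite split_bool.
rewrite pair_big_dep; apply: eq_big => [[p b]|[p b] /andP[_ le_pN]] /=; first by rewrite andbT.
by rewrite IHi // (leq_trans (leq_subr _ _) (leq_trans le_pN le_NM)).
Qed.

Lemma obinom_op_atmost N k : obinom (N + k) k q t = op_atmost N k.
Proof.
rewrite /obinom addnK; apply: eq_bigr => i _.
rewrite -(op_tuple_sum_exact _ (leqnn N)); apply: eq_bigl => s.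
by rewrite parts_le_op_seq andbT.
Qed.

End OverpartitionGF.

Theorem proposition4p1 (R : comNzRingType) (q t : R) (m n : nat)
  (hm : (0 < m)%N) (hn : (0 < n)%N) :
  obinom (m + n + 1) (m + 1) q t =
  1 + \sum_(1 <= j < n.+1)
        q ^+ j * (obinom (m + j) j q t + t * obinom (m + j - 1) (j - 1) q t).
Proof.
(* The identity holds for all [m] and [n]. *)
rewrite addnAC addnC obinom_op_atmost addn1 op_atmost_telescope; congr (1 + _).
apply: eq_big_nat => j /andP[j_pos _].
by rewrite -addnBA // !obinom_op_atmost subn1 !(op_atmostC _ _ m).
Qed.
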